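(* Let $l^1 < l^2 < l^3$ and let $g : [l^1,l^3] \to \mathbb{R}$ be continuous (and defined at $0$), concave on $[l^1,l^2]$ and convex on $[l^2,l^3]$. Let $\alpha^1 = (g(l^2)-g(l^1))/(l^2-l^1)$. For $x \in [l^1,l^3]$ define the continuous relaxation of the Incremental Model $$g_{IM}(x) = \min\Big\{ g(l^1) + \alpha^1\phi^1 + \gamma^2 \;:\; \gamma^2 \ge [g(l^2 + \phi^2/\psi^2) - g(l^2)]\psi^2,\ x = l^1 + \phi^1 + \phi^2,\ (l^{s+1}-l^s)\psi^{s+1} \le \phi^s \le (l^{s+1}-l^s)\psi^s \ (s=1,2),\ \psi^1 = 1,\ \psi^3 = 0\Big\}$$ and the continuous relaxation of the Multiple Choice Model $$g_{MCM}(x) = \min\Big\{ g(0)y^2 + \alpha^1 x^1 + [g(l^1) - \alpha^1 l^1]y^1 + z^2 \;:\; x = x^1 + x^2,\ z^2 \ge [g(x^2/y^2) - g(0)]y^2,\ l^s y^s \le x^s \le l^{s+1}y^s\ (s=1,2),\ y^1 + y^2 = 1,\ y^1,y^2 \ge 0\Big\},$$ where a perspective term $[h(a/b)]b$ with $b=0$ (and hence $a=0$) is interpreted as $0$. Then $g_{IM}(x) = g_{MCM}(x)$ for every $x \in [l^1,l^3]$, i.e. the continuous relaxations of the Incremental Model and the Multiple Choice Model are equivalent.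
   Context: These are the two piecewise-convex formulations (with perspective reformulation on the convex interval and the secant on the concave interval) of a univariate function whose domain splits into a concave interval followed by a convex interval; the binary activation variables ($\psi^2$ in the Incremental Model, $y^1,y^2$ in the Multiple Choice Model) are relaxed to be continuous. *)

From Stdlib Require Import Reals.
Open Scope R_scope.

Definition persp (h : R -> R) (a b : R) : R :=
  if Req_EM_T b 0 then 0 else h (a / b) * b.

Definition continuous_on_Icc (g : R -> R) (a b : R) : Prop :=
  forall x, a <= x <= b ->
    forall eps, 0 < eps -> exists delta, 0 < delta /\
      forall y, a <= y <= b -> Rabs (y - x) < delta -> Rabs (g y - g x) < eps.

Definition convex_on (g : R -> R) (a b : R) : Prop :=
  forall x y t, a <= x <= b -> a <= y <= b -> 0 <= t <= 1 ->
    g (t * x + (1 - t) * y) <= t * g x + (1 - t) * g y.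

Definition concave_on (g : R -> R) (a b : R) : Prop :=
  forall x y t, a <= x <= b -> a <= y <= b -> 0 <= t <= 1 ->
    t * g x + (1 - t) * g y <= g (t * x + (1 - t) * y).

Definition is_min (S : R -> Prop) (v : R) : Prop :=
  S v /\ forall w, S w -> v <= w.

Definition IM_values (g : R -> R) (l1 l2 l3 x : R) (v : R) : Prop :=
  let alpha1 := (g l2 - g l1) / (l2 - l1) in
  exists phi1 phi2 psi1 psi2 psi3 gam2,
    psi1 = 1 /\ psi3 = 0 /\
    gam2 >= persp (fun t => g (l2 + t) - g l2) phi2 psi2 /\
    x = l1 + phi1 + phi2 /\
    (l2 - l1) * psi2 <= phi1 <= (l2 - l1) * psi1 /\
    (l3 - l2) * psi3 <= phi2 <= (l3 - l2) * psi2 /\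
    v = g l1 + alpha1 * phi1 + gam2.

Definition MCM_values (g : R -> R) (l1 l2 l3 x : R) (v : R) : Prop :=
  let alpha1 := (g l2 - g l1) / (l2 - l1) in
  exists x1 x2 y1 y2 z2,
    x = x1 + x2 /\
    z2 >= persp (fun t => g t - g 0) x2 y2 /\
    l1 * y1 <= x1 <= l2 * y1 /\
    l2 * y2 <= x2 <= l3 * y2 /\
    y1 + y2 = 1 /\ y1 >= 0 /\ y2 >= 0 /\
    v = g 0 * y2 + alpha1 * x1 + (g l1 - alpha1 * l1) * y1 + z2.

From Stdlib Require Import Reals Lra Psatz.
Open Scope R_scope.

(* Writing b = l2 + phi2/psi2 (resp. b = x2/y2) resolves the perspective terms
   and shows that both relaxations have the same feasible values: a mixture,
   with weight psi on the convex piece, of the secant of g over [l1,l2] at some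
   point a and of g at a point b of [l2,l3], plus slack.  Let s be the least
   slope of a chord from (l1, g l1) to the graph of g over [l2,l3], attained at
   bs by continuity.  Since s is at most the secant slope, every mixture lies
   above the chord of slope s; beyond bs it also lies above g, by convexity of g
   on [bs,l3].  Both bounds are attained, so the minimum is the chord up to bs
   and g after it. *)

Lemma persp_mul (h : R -> R) (psi c : R) : persp h (psi * c) psi = psi * h c.
Proof.
  unfold persp; destruct (Req_EM_T psi 0) as [-> | psi_neq0]; [ring |].
  replace (psi * c / psi) with c by (field; exact psi_neq0); ring.
Qed.

Lemma persp_point (h : R -> R) (lo hi a psi : R) :
  lo <= hi -> 0 <= psi -> lo * psi <= a <= hi * psi ->
  exists b, lo <= b <= hi /\ a = psi * b /\ persp h a psi = psi * h b.
Proof.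
  intros lo_hi psi_ge0 a_in.
  destruct (Req_EM_T psi 0) as [psi0 | psi_neq0].
  - subst psi; exists lo; unfold persp; destruct (Req_EM_T 0 0); [|easy].
    repeat split; lra.
  - exists (a / psi).
    assert (a_eq : a = psi * (a / psi)) by (field; exact psi_neq0).
    split; [| split; [exact a_eq | rewrite a_eq at 1; apply persp_mul]].
    split; apply (Rmult_le_reg_r psi); nra.
Qed.

Definition secant_slope (g : R -> R) (a b : R) : R := (g b - g a) / (b - a).

(* [Q] stands for (1 - psi) * a with a in [l1,l2], which avoids dividing by
   1 - psi. *)
Definition mix_values (g : R -> R) (l1 l2 l3 x v : R) : Prop :=
  exists psi Q b,
    0 <= psi <= 1 /\ (1 - psi) * l1 <= Q <= (1 - psi) * l2 /\ l2 <= b <= l3 /\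
    x = Q + psi * b /\
    (1 - psi) * g l1 + secant_slope g l1 l2 * (Q - (1 - psi) * l1) + psi * g b <= v.

Lemma secant_slopeE (g : R -> R) (a b : R) :
  a <> b -> g b = g a + secant_slope g a b * (b - a).
Proof. intros; unfold secant_slope; field; lra. Qed.

Lemma IM_values_mix (g : R -> R) (l1 l2 l3 x v : R) :
  l1 < l2 -> l2 < l3 ->
  IM_values g l1 l2 l3 x v <-> mix_values g l1 l2 l3 x v.
Proof.
  intros l12 l23; unfold IM_values, mix_values; cbv zeta; fold (secant_slope g l1 l2).
  pose proof (secant_slopeE g l1 l2 ltac:(lra)) as g_l2.
  set (al := secant_slope g l1 l2) in *.
  split.
  - intros (phi1 & phi2 & psi1 & psi2 & psi3 & gam2 &
            -> & -> & gam2_ge & x_eq & phi1_in & phi2_in & ->).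
    assert (psi2_in : 0 <= psi2 <= 1) by nra.
    destruct (persp_point (fun t => g (l2 + t) - g l2) 0 (l3 - l2) phi2 psi2)
      as (d & d_in & phi2_eq & persp_eq); try lra.
    exists psi2, (l1 + phi1 - psi2 * l2), (l2 + d); rewrite persp_eq in gam2_ge.
    repeat split; nra.
  - intros (psi & Q & b & psi_in & Q_in & b_in & x_eq & v_ge).
    exists (Q + psi * l2 - l1), (psi * (b - l2)), 1, psi, 0,
      (v - g l1 - al * (Q + psi * l2 - l1)).
    rewrite persp_mul; replace (l2 + (b - l2)) with b by ring.
    repeat split; nra.
Qed.

Lemma MCM_values_mix (g : R -> R) (l1 l2 l3 x v : R) :
  l1 < l2 -> l2 < l3 ->
  MCM_values g l1 l2 l3 x v <-> mix_values g l1 l2 l3 x v.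
Proof.
  intros l12 l23; unfold MCM_values, mix_values; cbv zeta; fold (secant_slope g l1 l2).
  set (al := secant_slope g l1 l2).
  split.
  - intros (x1 & x2 & y1 & y2 & z2 &
            x_eq & z2_ge & x1_in & x2_in & y_sum & y1_ge0 & y2_ge0 & ->).
    destruct (persp_point (fun t => g t - g 0) l2 l3 x2 y2)
      as (b & b_in & x2_eq & persp_eq); try lra.
    exists y2, x1, b; rewrite persp_eq in z2_ge.
    repeat split; nra.
  - intros (psi & Q & b & psi_in & Q_in & b_in & x_eq & v_ge).
    exists Q, (psi * b), (1 - psi), psi,
      (v - g 0 * psi - al * Q - (g l1 - al * l1) * (1 - psi)).
    rewrite persp_mul.
    repeat split; nra.
Qed.

Lemma is_min_iff (S S' : R -> Prop) (v : R) :
  (forall w, S w <-> S' w) -> is_min S' v -> is_min S v.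
Proof.
  intros S_S' [S'_v v_le]; split; [apply S_S', S'_v |].
  intros w S_w; apply v_le, S_S', S_w.
Qed.

(* [continuity_ab_min] needs continuity on all of R, so g is extended by
   constants outside [a,b]. *)
Definition clamp (a b t : R) : R := Rmax a (Rmin b t).

Lemma clamp_in (a b t : R) : a <= b -> a <= clamp a b t <= b.
Proof. intros; unfold clamp, Rmax, Rmin; repeat destruct Rle_dec; lra. Qed.

Lemma clamp_id (a b t : R) : a <= t <= b -> clamp a b t = t.
Proof. intros; unfold clamp, Rmax, Rmin; repeat destruct Rle_dec; lra. Qed.

Lemma clamp_lipschitz (a b t u : R) :
  a <= b -> Rabs (clamp a b t - clamp a b u) <= Rabs (t - u).
Proof.
  intros; unfold clamp, Rmax, Rmin, Rabs.
  repeat destruct Rle_dec; repeat destruct Rcase_abs; lra.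
Qed.

Lemma continuous_on_Icc_sub (g : R -> R) (a b c d : R) :
  a <= c -> d <= b -> continuous_on_Icc g a b -> continuous_on_Icc g c d.
Proof.
  intros a_c d_b g_cont x x_in eps eps_pos.
  destruct (g_cont x ltac:(lra) eps eps_pos) as (delta & delta_pos & g_close).
  exists delta; split; [assumption |].
  intros y y_in; apply g_close; lra.
Qed.

Lemma continuity_pt_clamp (g : R -> R) (a b c : R) :
  a <= b -> continuous_on_Icc g a b -> continuity_pt (fun t => g (clamp a b t)) c.
Proof.
  intros a_b g_cont eps eps_pos.
  destruct (g_cont (clamp a b c) (clamp_in a b c a_b) eps eps_pos)
    as (delta & delta_pos & g_close).
  exists delta; split; [assumption |].
  intros y [_ y_close]; simpl in *; unfold R_dist in *.
  apply g_close; [apply clamp_in; assumption |].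
  eapply Rle_lt_trans; [apply clamp_lipschitz |]; assumption.
Qed.

Lemma exists_lowest_chord (g : R -> R) (l1 l2 l3 : R) :
  l1 < l2 -> l2 <= l3 -> continuous_on_Icc g l2 l3 ->
  exists s bs, l2 <= bs <= l3 /\ g bs = g l1 + s * (bs - l1) /\
    (forall t, l2 <= t <= l3 -> g l1 + s * (t - l1) <= g t) /\
    s <= secant_slope g l1 l2.
Proof.
  intros l12 l23 g_cont.
  set (slope t := (g (clamp l2 l3 t) - g l1) / (t - l1)).
  destruct (continuity_ab_min slope l2 l3 l23) as (bs & slope_min & bs_in).
  { intros c c_in; apply continuity_pt_div; [| | lra].
    - apply continuity_pt_minus;
        [apply continuity_pt_clamp; assumption | apply continuity_pt_const; easy].
    - apply continuity_pt_minus;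
        [apply derivable_continuous_pt, derivable_pt_id | apply continuity_pt_const; easy]. }
  assert (slopeE : forall t, l2 <= t <= l3 -> slope t = secant_slope g l1 t)
    by (intros t t_in; unfold slope; rewrite clamp_id; easy).
  exists (slope bs), bs; rewrite slopeE in * by assumption.
  split; [assumption | split; [| split]].
  - apply secant_slopeE; lra.
  - intros t t_in; rewrite (secant_slopeE g l1 t) by lra.
    specialize (slope_min t t_in); rewrite slopeE in slope_min by assumption.
    apply Rplus_le_compat_l, Rmult_le_compat_r; lra.
  - rewrite <- (slopeE l2) by lra; apply slope_min; lra.
Qed.

Section LowestChord.

Variables (g : R -> R) (l1 l2 l3 s bs : R).
Hypotheses (l12 : l1 < l2) (bs_in : l2 <= bs <= l3).
Hypothesis chord_below : forall t, l2 <= t <= l3 -> g l1 + s * (t - l1) <= g t.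
Hypothesis chord_touches : g bs = g l1 + s * (bs - l1).
Hypothesis slope_le_secant : s <= secant_slope g l1 l2.

Lemma mix_values_ge_chord (x v : R) :
  mix_values g l1 l2 l3 x v -> g l1 + s * (x - l1) <= v.
Proof.
  intros (psi & Q & b & psi_in & Q_in & b_in & -> & v_ge).
  assert (g_b : psi * (g l1 + s * (b - l1)) <= psi * g b)
    by (apply Rmult_le_compat_l; [lra | apply chord_below; lra]).
  assert (secant_ge : s * (Q - (1 - psi) * l1)
                      <= secant_slope g l1 l2 * (Q - (1 - psi) * l1))
    by (apply Rmult_le_compat_r; lra).
  nra.
Qed.

Lemma mix_values_ge_g (x v : R) :
  convex_on g l2 l3 -> bs < x -> mix_values g l1 l2 l3 x v -> g x <= v.
Proof.
  intros g_convex bs_x (psi & Q & b & psi_in & Q_in & b_in & x_eq & v_ge).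
  assert (bs_b : bs < b).
  { destruct (Rlt_le_dec bs b) as [? | b_bs]; [assumption | nra]. }
  set (t := (b - x) / (b - bs)).
  assert (t_eq : t * (b - bs) = b - x) by (unfold t; field; lra).
  assert (t_in : 1 - psi <= t <= 1) by nra.
  assert (x_comb : t * bs + (1 - t) * b = x) by nra.
  assert (g_x := g_convex bs b t bs_in b_in ltac:(lra)); rewrite x_comb in g_x.
  assert (g_b : (psi - 1 + t) * (g l1 + s * (b - l1)) <= (psi - 1 + t) * g b)
    by (apply Rmult_le_compat_l; [lra | apply chord_below; lra]).
  assert (secant_ge : s * (Q - (1 - psi) * l1)
                      <= secant_slope g l1 l2 * (Q - (1 - psi) * l1))
    by (apply Rmult_le_compat_r; lra).
  nra.
Qed.

Lemma mix_values_chord (x : R) :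
  l1 <= x <= bs -> mix_values g l1 l2 l3 x (g l1 + s * (x - l1)).
Proof.
  intros x_in.
  set (psi := (x - l1) / (bs - l1)).
  assert (psi_eq : psi * (bs - l1) = x - l1) by (unfold psi; field; lra).
  assert (psi_in : 0 <= psi <= 1) by nra.
  exists psi, ((1 - psi) * l1), bs.
  repeat split; nra.
Qed.

Lemma mix_values_g (x : R) : l2 <= x <= l3 -> mix_values g l1 l2 l3 x (g x).
Proof. intros x_in; exists 1, 0, x; repeat split; lra. Qed.

Lemma mix_values_has_min (x : R) :
  convex_on g l2 l3 -> l1 <= x <= l3 -> exists v, is_min (mix_values g l1 l2 l3 x) v.
Proof.
  intros g_convex x_in.
  destruct (Rle_lt_dec x bs) as [x_bs | bs_x].
  - exists (g l1 + s * (x - l1)); split.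
    + apply mix_values_chord; lra.
    + apply mix_values_ge_chord.
  - exists (g x); split.
    + apply mix_values_g; lra.
    + intros w; apply mix_values_ge_g; assumption.
Qed.

End LowestChord.

Theorem proposition1 (g : R -> R) (l1 l2 l3 : R) :
  l1 < l2 -> l2 < l3 ->
  continuous_on_Icc g l1 l3 ->
  concave_on g l1 l2 ->
  convex_on g l2 l3 ->
  forall x, l1 <= x <= l3 ->
    exists v, is_min (IM_values g l1 l2 l3 x) v /\
              is_min (MCM_values g l1 l2 l3 x) v.
Proof.
  intros l12 l23 g_cont _ g_convex x x_in.
  destruct (exists_lowest_chord g l1 l2 l3 l12 ltac:(lra)
              (continuous_on_Icc_sub g l1 l3 l2 l3 ltac:(lra) ltac:(lra) g_cont))
    as (s & bs & bs_in & touches & below & slope_le).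
  destruct (mix_values_has_min g l1 l2 l3 s bs l12 bs_in below touches slope_le
              x g_convex x_in) as (v & v_min).
  exists v; split.
  - exact (is_min_iff _ _ v (fun w => IM_values_mix g l1 l2 l3 x w l12 l23) v_min).
  - exact (is_min_iff _ _ v (fun w => MCM_values_mix g l1 l2 l3 x w l12 l23) v_min).
Qed.
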